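(* There is an absolute constant $c>0$ such that: given a 2D SLP $\mathcal G$ deriving a 2D string $T\in\Sigma^{N\times M}$ with $N\le M$, one can construct a 1D SLP of size at most $c\cdot|\mathcal G|\cdot N$ deriving the string $T[1]\cdot T[2]\cdots T[N]$ of length $NM$ (the concatenation of all rows of $T$, from top to bottom).
   Context: Let $\Sigma$ be a fixed finite alphabet. A 2D string of size $n\times m$ is an $n\times m$ array of characters of $\Sigma$; $\mathrm{h}(S)=n$ is its height and $\mathrm{w}(S)=m$ its width; $S[i]$ denotes its $i$-th row (a string of length $m$). For 2D strings $A,B$ with $\mathrm{h}(A)=\mathrm{h}(B)$, $A \oplus_{\mathrm h} B$ denotes their horizontal concatenation ($B$ placed to the right of $A$); for $\mathrm{w}(A)=\mathrm{w}(B)$, $A\oplus_{\mathrm v} B$ denotes their vertical concatenation ($B$ placed below $A$). A 2D SLP is a triple $\mathcal{G}=(\mathcal{V},\mathcal{S},\rho)$ where $\mathcal{V}$ is a finite set of nonterminals (disjoint from $\Sigma$), each $X\in\mathcal V$ having a dimension $(\mathrm h(X),\mathrm w(X))$, $\mathcal S\in\mathcal V$ is the starting nonterminal, and $\rho$ assigns to each $X$ a right-hand side which is either a character $\sigma\in\Sigma$ (then $\mathrm h(X)=\mathrm w(X)=1$), or $Y\oplus_{\mathrm h} Z$ with $Y,Z\in\mathcal V$, $\mathrm h(X)=\mathrm h(Y)=\mathrm h(Z)$, $\mathrm w(X)=\mathrm w(Y)+\mathrm w(Z)$, or $Y\oplus_{\mathrm v}Z$ with $Y,Z\in\mathcal V$,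 $\mathrm w(X)=\mathrm w(Y)=\mathrm w(Z)$, $\mathrm h(X)=\mathrm h(Y)+\mathrm h(Z)$; the relation ''$Y$ occurs in the right-hand side of $X$'' must be acyclic. The expansion $\exp(X)$ is defined recursively, and $\exp(\mathcal G)=\exp(\mathcal S)$ is the derived string. The size $|\mathcal G|$ is the total number of symbols (nonterminals and characters) on all right-hand sides. A 1D SLP is a 2D SLP using only character and horizontal-concatenation productions; it derives a $1\times n$ string, identified with an ordinary string of length $n$. *)

From mathcomp Require Import all_boot.
Set Implicit Arguments. Unset Strict Implicit. Unset Printing Implicit Defensive.

(* 2D strings over Sigma are represented as the sequence of their rows. *)
Definition str2 (Sigma : Type) := seq (seq Sigma).
Definition height {Sigma : Type} (A : str2 Sigma) : nat := size A.
Definition width {Sigma : Type} (A : str2 Sigma) : nat := size (head [::] A).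

Definition hcat {Sigma : Type} (A B : str2 Sigma) : str2 Sigma :=
  map (fun p => p.1 ++ p.2) (zip A B).
Definition vcat {Sigma : Type} (A B : str2 Sigma) : str2 Sigma := A ++ B.

(* Right-hand sides: nonterminals are natural numbers (indices of rules). *)
Inductive rhs (Sigma : Type) :=
  | RChar of Sigma
  | RH of nat & nat
  | RV of nat & nat.
Arguments RChar {Sigma}. Arguments RH {Sigma}. Arguments RV {Sigma}.

(* A grammar is a list of rules; rule i is the RHS of nonterminal i. *)
Definition grammar (Sigma : Type) := seq (rhs Sigma).

Definition step {Sigma : Type} (acc : seq (str2 Sigma)) (r : rhs Sigma) : str2 Sigma :=
  match r with
  | RChar a => [:: [:: a]]
  | RH j k => hcat (nth [::] acc j) (nth [::] acc k)
  | RV j k => vcat (nth [::] acc j) (nth [::] acc k)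
  end.

Definition expansions {Sigma : Type} (g : grammar Sigma) : seq (str2 Sigma) :=
  foldl (fun acc r => rcons acc (step acc r)) [::] g.

Definition expand {Sigma : Type} (g : grammar Sigma) (i : nat) : str2 Sigma :=
  nth [::] (expansions g) i.

(* Well-formedness of a 2D SLP: acyclicity (each rule refers only to
   earlier nonterminals) and the dimension constraints. *)
Definition valid_rule {Sigma : Type} (g : grammar Sigma) (i : nat) (r : rhs Sigma) : Prop :=
  match r with
  | RChar _ => True
  | RH j k => [/\ j < i, k < i & height (expand g j) = height (expand g k)]
  | RV j k => [/\ j < i, k < i & width (expand g j) = width (expand g k)]
  end.

Definition is_SLP2 {Sigma : Type} (g : grammar Sigma) (s : nat) : Prop :=
  s < size g /\ forall i, i < size g -> valid_rule g i (nth (RH 0 0) g i).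

(* A 1D SLP: a 2D SLP using only character and horizontal rules. *)
Definition is_SLP1 {Sigma : Type} (g : grammar Sigma) (s : nat) : Prop :=
  is_SLP2 g s /\ all (fun r => if r is RV _ _ then false else true) g.

(* Size: total number of symbols on right-hand sides. *)
Definition rhs_size {Sigma : Type} (r : rhs Sigma) : nat :=
  match r with RChar _ => 1 | _ => 2 end.
Definition gsize {Sigma : Type} (g : grammar Sigma) : nat := sumn (map rhs_size g).

(* Replace every nonterminal X of the 2D SLP by the list of 1D nonterminals
   deriving the first N rows of exp(X), where N is the height of T.  A
   character rule costs one 1D rule; a horizontal rule Y (+)_h Z costs one
   1D rule per row, concatenating the i-th rows of Y and Z, hence at most N;
   a vertical rule costs nothing, its list being the concatenation of the
   lists of Y and Z, truncated to N entries.  This yields at most 2N|G| rules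
   in which each row of T has its own nonterminal, and N - 1 further rules
   concatenate these rows, for a total size of at most 2N|G| + 2N <= 4N|G|. *)

From mathcomp Require Import all_boot zify.
Set Implicit Arguments. Unset Strict Implicit. Unset Printing Implicit Defensive.

Section Grammars.
Variable Sigma : Type.
Implicit Types (g l : grammar Sigma) (acc : seq (str2 Sigma)) (r : rhs Sigma).

Definition refs_below n r : bool :=
  match r with RChar _ => true | RH j k | RV j k => (j < n) && (k < n) end.

Definition rules_valid g := forall i, i < size g -> valid_rule g i (nth (RH 0 0) g i).

Lemma refs_below_leq m n r : m <= n -> refs_below m r -> refs_below n r.
Proof.
by move=> mn; case: r => //= j k /andP[hj hk]; rewrite (leq_trans hj) ?(leq_trans hk).
Qed.

Lemma valid_rule_refs g i r : valid_rule g i r -> refs_below i r.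
Proof. by case: r => //= j k [-> ->]. Qed.

Lemma step_cat acc t r : refs_below (size acc) r -> step (acc ++ t) r = step acc r.
Proof. by case: r => //= j k /andP[hj hk]; rewrite !nth_cat hj hk. Qed.

Lemma step_take n acc r : refs_below n r -> step (take n acc) r = step acc r.
Proof. by case: r => //= j k /andP[hj hk]; rewrite !nth_take. Qed.

Lemma expansions_rcons g r :
  expansions (rcons g r) = rcons (expansions g) (step (expansions g) r).
Proof. by rewrite /expansions foldl_rcons. Qed.

Lemma size_expansions g : size (expansions g) = size g.
Proof. by elim/last_ind: g => [|g r IH] //; rewrite expansions_rcons !size_rcons IH. Qed.

Lemma expansions_catl g l : exists t, expansions (g ++ l) = expansions g ++ t.
Proof.
elim/last_ind: l => [|l r [t E]]; first by exists [::]; rewrite !cats0.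
exists (rcons t (step (expansions (g ++ l)) r)).
by rewrite -rcons_cat expansions_rcons E rcons_cat.
Qed.

Lemma expansions_cat g l : all (refs_below (size g)) l ->
  expansions (g ++ l) = expansions g ++ map (step (expansions g)) l.
Proof.
elim/last_ind: l => [|l r IH]; first by rewrite !cats0.
rewrite all_rcons => /andP[hr hl].
rewrite -rcons_cat expansions_rcons IH // step_cat ?size_expansions //.
by rewrite map_rcons rcons_cat.
Qed.

Lemma expand_catl g l x : x < size g -> expand (g ++ l) x = expand g x.
Proof.
by move=> hx; have [t E] := expansions_catl g l; rewrite /expand E nth_cat size_expansions hx.
Qed.

Lemma expansions_take g n : n <= size g -> expansions (take n g) = take n (expansions g).
Proof.
move=> hn; have [t E] := expansions_catl (take n g) (drop n g).
by rewrite cat_take_drop in E; rewrite E take_size_cat // size_expansions size_takel.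
Qed.

Lemma expand_nth g n : n < size g -> refs_below n (nth (RH 0 0) g n) ->
  expand g n = step (expansions g) (nth (RH 0 0) g n).
Proof.
move=> hn hr.
rewrite -{1}(cat_take_drop n.+1 g) expand_catl; last by rewrite size_takel.
rewrite (take_nth (RH 0 0) hn) /expand expansions_rcons nth_rcons size_expansions.
have hn_le := ltnW hn.
by rewrite size_takel // ltnn eqxx expansions_take // step_take.
Qed.

Lemma expand_pos g n : rules_valid g -> n < size g -> 0 < height (expand g n).
Proof.
move=> hv; elim/ltn_ind: n => n IH hn.
have hr := hv n hn.
rewrite expand_nth //; last exact: valid_rule_refs hr.
move: hr; case: (nth _ g n) => //= j k [hj hk _].
all: have := IH j hj (ltn_trans hj hn); have := IH k hk (ltn_trans hk hn).
all: rewrite /height /expand /hcat /vcat.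
- by rewrite size_map size_zip leq_min => -> ->.
- by rewrite size_cat addn_gt0 => _ ->.
Qed.

Definition hrule r : bool := if r is RV _ _ then false else true.
Definition hrule_below n r := refs_below n r && hrule r.
Definition slp1_rules g := forall i, i < size g -> hrule_below i (nth (RH 0 0) g i).

Definition row g x : seq Sigma := head [::] (expand g x).

(* Only used on character and horizontal rules; the value on [RV] is arbitrary. *)
Definition rule_row g r : seq Sigma :=
  match r with RChar a => [:: a] | RH j k => row g j ++ row g k | RV _ _ => [::] end.

Lemma expand_row g x : slp1_rules g -> x < size g -> expand g x = [:: row g x].
Proof.
move=> hg; elim/ltn_ind: x => x IH hx.
have /andP[hr hh] := hg x hx.
rewrite /row expand_nth //; move: hr hh; case: (nth _ g x) => //= j k /andP[hj hk] _.
by rewrite -/(expand g j) -/(expand g k) IH ?IH // ?(ltn_trans hj hx) ?(ltn_trans hk hx).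
Qed.

Lemma row_catl g l x : x < size g -> row (g ++ l) x = row g x.
Proof. by move=> hx; rewrite /row expand_catl. Qed.

Lemma row_cat g l t : slp1_rules g -> all (hrule_below (size g)) l -> t < size l ->
  row (g ++ l) (size g + t) = rule_row g (nth (RH 0 0) l t).
Proof.
move=> hg hl ht.
have hrefs : all (refs_below (size g)) l by apply: sub_all hl => r /andP[].
move/(all_nthP (RH 0 0))/(_ t ht)/andP: hl => [hr hh].
rewrite /row /expand expansions_cat // nth_cat size_expansions ltnNge leq_addr addKn /=.
rewrite (nth_map (RH 0 0)) //; move: hr hh; case: (nth _ l t) => //= j k /andP[hj hk] _.
by rewrite -/(expand g j) -/(expand g k) !expand_row.
Qed.

Lemma slp1_rules_cat g l : slp1_rules g -> all (hrule_below (size g)) l -> slp1_rules (g ++ l).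
Proof.
move=> hg hl i; rewrite size_cat nth_cat.
case: (ltnP i (size g)) => [hi _|hgi hi]; first exact: hg.
have /andP[hr hh] : hrule_below (size g) (nth (RH 0 0) l (i - size g)).
  by move/(all_nthP (RH 0 0)): hl; apply; rewrite ltn_subLR.
by rewrite /hrule_below hh (refs_below_leq hgi hr).
Qed.

Lemma slp1_rules_SLP1 g s : slp1_rules g -> s < size g -> is_SLP1 g s.
Proof.
move=> hg hs; split; first split => // i hi.
  have /andP[] := hg i hi; case: (nth _ g i) => //= j k /andP[hj hk] _.
  by split => //; rewrite /height !expand_row // ?(ltn_trans hj hi) ?(ltn_trans hk hi).
by apply/(all_nthP (RH 0 0)) => i hi; have /andP[] := hg i hi.
Qed.

Lemma gsize_cat g l : gsize (g ++ l) = gsize g + gsize l.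
Proof. by rewrite /gsize map_cat sumn_cat. Qed.

Lemma size_le_gsize g : size g <= gsize g.
Proof. by elim: g => [|r g IH] //=; rewrite /gsize /= -/(gsize g) -add1n leq_add //; case: r. Qed.

Definition encodes g (ids : seq nat) (A : str2 Sigma) :=
  all (fun x => x < size g) ids /\ map (row g) ids = A.

Lemma map_row_catl g l ids : all (fun x => x < size g) ids ->
  map (row (g ++ l)) ids = map (row g) ids.
Proof. by move=> hids; apply/eq_in_map => x /(allP hids) hx; rewrite row_catl. Qed.

Lemma encodes_catl g l ids A : encodes g ids A -> encodes (g ++ l) ids A.
Proof.
case=> hids <-; split; last exact: map_row_catl.
by apply: sub_all hids => x hx; rewrite size_cat ltn_addr.
Qed.

Lemma concat_rows g x ids : slp1_rules g -> x < size g -> all (fun y => y < size g) ids ->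
  exists g' s', [/\ slp1_rules g', s' < size g',
    row g' s' = flatten (map (row g) (x :: ids)) & gsize g' = gsize g + 2 * size ids].
Proof.
elim: ids g x => [|y ids IH] g x hg hx /=; first by exists g, x; rewrite cats0 muln0 addn0.
case/andP=> hy hids.
have hl : all (hrule_below (size g)) [:: RH x y] by rewrite /= /hrule_below /= hx hy.
have hx' : size g < size (g ++ [:: RH x y]) by rewrite size_cat addn1.
have hids' : all (fun z => z < size (g ++ [:: RH x y])) ids.
  by apply: sub_all hids => z hz; rewrite size_cat ltn_addr.
have [g' [s' [hg' hs' hrow hsize]]] := IH _ _ (slp1_rules_cat hg hl) hx' hids'.
exists g', s'; split => //; last by rewrite hsize gsize_cat mulnS addnA.
have := row_cat hg hl (t:=0) isT; rewrite addn0 => hnew.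
by rewrite hrow /= hnew map_row_catl // catA.
Qed.

Lemma slp1_of_encoding g ids A : slp1_rules g -> encodes g ids A -> 0 < size A ->
  exists g' s', [/\ is_SLP1 g' s', gsize g' <= gsize g + 2 * size A
    & expand g' s' = [:: flatten A]].
Proof.
move=> hg [hids <-]; case: ids hids => [//|x ids] /andP[hx hids] _.
have [g' [s' [hg' hs' hrow hsize]]] := concat_rows hg hx hids.
exists g', s'; split; first exact: slp1_rules_SLP1.
  by rewrite hsize /= size_map leq_add2l leq_mul2l leqnSn orbT.
by rewrite expand_row // hrow.
Qed.

Lemma hcat_map T (f : T -> seq Sigma) (s t : seq T) :
  hcat (map f s) (map f t) = map (fun p => f p.1 ++ f p.2) (zip s t).
Proof. by rewrite /hcat; elim: s t => [|a s IH] [|b t] //=; rewrite IH. Qed.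

Lemma take_hcat n (A B : str2 Sigma) : take n (hcat A B) = hcat (take n A) (take n B).
Proof. by rewrite /hcat; elim: n A B => [|n IH] [|a A] [|b B] //=; rewrite IH. Qed.

Lemma take_cat_take T n (x y : seq T) : take n (take n x ++ take n y) = take n (x ++ y).
Proof.
case: (ltnP n (size x)) => hx.
  by rewrite take_cat size_take hx ltnn subnn take0 cats0 take_cat hx.
by rewrite (take_oversize hx) !take_cat ltnNge hx /= take_takel ?leq_subr.
Qed.

Definition hcat_rules (ids ids' : seq nat) : grammar Sigma :=
  map (fun p => RH p.1 p.2) (zip ids ids').

Lemma hcat_rules_below n ids ids' : all (fun x => x < n) ids -> all (fun x => x < n) ids' ->
  all (hrule_below n) (hcat_rules ids ids').
Proof.
elim: ids ids' => [|a ids IH] [|b ids'] //= /andP[ha hids] /andP[hb hids'].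
by rewrite /hrule_below /= ha hb IH.
Qed.

Lemma gsize_hcat_rules ids ids' : gsize (hcat_rules ids ids') <= 2 * size ids.
Proof.
elim: ids ids' => [|a ids IH] [|b ids'] //=.
by rewrite mulnS; apply: (leq_add (leqnn 2) (IH ids')).
Qed.

Lemma encodes_hcat g ids ids' A B : slp1_rules g -> encodes g ids A -> encodes g ids' B ->
  encodes (g ++ hcat_rules ids ids') (iota (size g) (size (hcat_rules ids ids'))) (hcat A B).
Proof.
move=> hg [hids <-] [hids' <-].
have hl := hcat_rules_below hids hids'.
split.
  by apply/allP => x; rewrite mem_iota size_cat => /andP[_ ->].
rewrite -[size g]addn0 iotaDl -map_comp hcat_map.
rewrite -[in RHS](mkseq_nth (0, 0) (zip ids ids')) /mkseq -map_comp.
rewrite size_map; apply/eq_in_map => t; rewrite mem_iota => /= ht.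
by rewrite row_cat ?size_map // (nth_map (0, 0)).
Qed.

Lemma encodes_take_vcat g n ids ids' A B :
  encodes g ids (take n A) -> encodes g ids' (take n B) ->
  encodes g (take n (ids ++ ids')) (take n (vcat A B)).
Proof.
case=> hids eA [hids' eB]; split.
  have /allP hall : all (fun x => x < size g) (ids ++ ids') by rewrite all_cat hids.
  by apply/allP => x /mem_take /hall.
by rewrite map_take map_cat eA eB take_cat_take.
Qed.

Section Translation.
Variable N : nat.
Hypothesis N_gt0 : 0 < N.

(* Entry i of the table lists the 1D nonterminals deriving the first N rows of
   the expansion of the i-th 2D nonterminal. *)
Definition trans_rule (st : grammar Sigma * seq (seq nat)) r :=
  let: (g, tbl) := st in
  match r with
  | RChar a => (g ++ [:: RChar a], rcons tbl [:: size g])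
  | RH j k => let l := hcat_rules (nth [::] tbl j) (nth [::] tbl k) in
              (g ++ l, rcons tbl (iota (size g) (size l)))
  | RV j k => (g, rcons tbl (take N (nth [::] tbl j ++ nth [::] tbl k)))
  end.

Definition translate g := foldl trans_rule ([::], [::]) g.

Definition translation_inv (E : seq (str2 Sigma)) n (st : grammar Sigma * seq (seq nat)) :=
  [/\ slp1_rules st.1, size st.2 = n, gsize st.1 <= 2 * N * n
    & forall i, i < n -> encodes st.1 (nth [::] st.2 i) (take N (nth [::] E i))].

Lemma translation_inv_rcons E n g tbl l ids : translation_inv E n (g, tbl) ->
  all (hrule_below (size g)) l -> gsize l <= 2 * N ->
  encodes (g ++ l) ids (take N (nth [::] E n)) -> translation_inv E n.+1 (g ++ l, rcons tbl ids).
Proof.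
case=> /= hg hsz hgs henc hl hsl hnew; split => /=.
- exact: slp1_rules_cat.
- by rewrite size_rcons hsz.
- by rewrite gsize_cat mulnS addnC leq_add.
- move=> i; rewrite ltnS leq_eqVlt nth_rcons hsz => /orP[/eqP->|hi].
    by rewrite ltnn eqxx.
  by rewrite hi; apply/encodes_catl/henc.
Qed.

Lemma trans_rule_inv E n st r : translation_inv E n st -> refs_below n r ->
  nth [::] E n = step E r -> translation_inv E n.+1 (trans_rule st r).
Proof.
case: st => g tbl inv; have [hg hsz _ henc] := inv.
case: r => [a|j k|j k] /= hr hE.
- apply: translation_inv_rcons => //; first by rewrite /= muln_gt0 N_gt0.
  split; first by rewrite /= size_cat addn1 ltnSn.
  by rewrite hE take_oversize //= -[size g]addn0 row_cat.
- case/andP: hr => hj hk; have [hidsj _] := henc j hj; have [hidsk _] := henc k hk.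
  apply: translation_inv_rcons => //; first exact: hcat_rules_below hidsj hidsk.
    apply: leq_trans (gsize_hcat_rules _ _) _.
    by rewrite leq_mul2l -(size_map (row g)) (proj2 (henc j hj)) size_take_min geq_minl orbT.
  by rewrite hE take_hcat; apply: encodes_hcat; [|exact: henc..].
- case/andP: hr => hj hk; rewrite -[g in (g, _)]cats0.
  apply: translation_inv_rcons => //; rewrite cats0 hE.
  exact: encodes_take_vcat (henc j hj) (henc k hk).
Qed.

Lemma translate_inv g n : rules_valid g -> n <= size g ->
  translation_inv (expansions g) n (translate (take n g)).
Proof.
move=> hv; elim: n => [_|n IH hn]; first by rewrite take0; split=> // i.
have hr := valid_rule_refs (hv n hn).
rewrite /translate (take_nth (RH 0 0) hn) foldl_rcons -/(translate _).
by apply: trans_rule_inv => //; [apply: IH; exact: ltnW | rewrite -/(expand g n) expand_nth].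
Qed.

End Translation.

End Grammars.

Theorem mainTheorem3 :
  exists c : nat, 0 < c /\
  forall (Sigma : finType) (g : grammar Sigma) (s : nat),
    is_SLP2 g s ->
    height (expand g s) <= width (expand g s) ->
    exists (g' : grammar Sigma) (s' : nat),
      [/\ is_SLP1 g' s',
          gsize g' <= c * gsize g * height (expand g s)
        & expand g' s' = [:: flatten (expand g s)]].
Proof.
exists 4; split => // Sigma g s [hs hv] _.
set N := height (expand g s).
have N_gt0 : 0 < N by exact: expand_pos.
have [hg1 _ hsize1 henc] := translate_inv N_gt0 hv (leqnn (size g)).
rewrite take_size in hg1 hsize1 henc.
have := henc s hs; rewrite take_oversize // => hencs.
have [g' [s' [hslp hsize' hexp]]] := slp1_of_encoding hg1 hencs N_gt0.
exists g', s'; split => //.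
have := size_le_gsize g; have : 0 < size g by apply: leq_ltn_trans hs.
change (is_true (gsize g' <= gsize (translate N g).1 + 2 * N)) in hsize'.
nia.
Qed.
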